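(* Let $M=B\circ S$ with $S$ subsampling without replacement with batch size $q$, and let the batch relation be the substitution relation $\simeq_\Delta$ with induced distance $d_\Delta$. Then for every $\alpha>1$ and all datasets $x\simeq_\Delta x'$ of size $N$, $$\Lambda_\alpha(m_x\|m_{x'})\le\max_{y^{(1)}_1,y^{(1)}_2,y^{(2)}_1,y^{(2)}_2\in\mathbb Y}\Lambda_\alpha\big((1-w)b_{y^{(1)}_1}+w\,b_{y^{(1)}_2}\ \big\|\ (1-w)b_{y^{(2)}_1}+w\,b_{y^{(2)}_2}\big)$$ subject to $y^{(1)}_1=y^{(2)}_1$, $d_\Delta(y^{(1)}_1,y^{(1)}_2)\le1$, $d_\Delta(y^{(1)}_1,y^{(2)}_2)\le1$, $d_\Delta(y^{(1)}_2,y^{(2)}_2)\le1$, where $w=q/N$.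
   Context: Finite set $\mathbb A$, datasets are subsets of $\mathbb A$ with more than $q$ elements; batches are subsets of size $q$. Subsampling without replacement with batch size $q$: $s_x(y)=\binom{|x|}{q}^{-1}$ for $y\subseteq x$, $|y|=q$. $B$ assigns a density $b_y$ on $\mathbb R^D$ to each batch; $m_x=\sum_y b_y s_x(y)$. Substitution relation: $u\simeq_\Delta u'$ iff $u'=(u\setminus\{a\})\cup\{a'\}$ for some $a\in u$, $a'\notin u$ (used both for datasets and batches); $d_\Delta$ is the induced distance (length of shortest chain of neighbors, $0$ from a set to itself). $\Lambda_\alpha(p\|q)=\int p^\alpha q^{1-\alpha}dz$. *)

From HB Require Import structures.
From mathcomp Require Import all_boot all_order all_algebra.
From mathcomp Require Import all_classical all_reals all_analysis.
Set Implicit Arguments. Unset Strict Implicit. Unset Printing Implicit Defensive.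
Import Order.TTheory GRing.Theory Num.Theory.
Local Open Scope ring_scope.

Definition subst_rel (A : finType) (u u' : {set A}) : Prop :=
  exists a a', [/\ a \in u, a' \notin u & u' = (u :\ a) :|: [set a']].

(* dist_le k u v  <->  d_Delta(u, v) <= k, where d_Delta is the length of a
   shortest chain of substitution neighbours (0 from a set to itself). *)
Fixpoint dist_le (A : finType) (k : nat) (u v : {set A}) : Prop :=
  match k with
  | 0 => u = v
  | k'.+1 => dist_le k' u v \/ exists w, dist_le k' u w /\ subst_rel w v
  end.

Definition mixture (R : realType) (A : finType) (T : Type) (q : nat)
  (b : {set A} -> T -> R) (x : {set A}) : T -> R :=
  fun z => \sum_(y : {set A} | (y \subset x) && (#|y| == q))
             b y z / ('C(#|x|, q))%:R.

Definition renyi_integrand (R : realType) (alpha : R) (p q : R) : \bar R :=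
  if p == 0 then 0%E
  else if q == 0 then +oo%E
  else ((powR p alpha) * (powR q (1 - alpha)))%:E.

Definition Lambda (R : realType) (d : measure_display) (T : measurableType d)
  (mu : {measure set T -> \bar R}) (alpha : R) (p q : T -> R) : \bar R :=
  (\int[mu]_z renyi_integrand alpha (p z) (q z))%E.

Definition is_density (R : realType) (d : measure_display) (T : measurableType d)
  (mu : {measure set T -> \bar R}) (f : T -> R) : Prop :=
  [/\ measurable_fun setT f, (forall z, 0 <= f z) &
      (\int[mu]_z (f z)%:E = 1)%E].

(* Write x' = (x \ {a}) u {a'} and S = x \ {a}.  Every q-batch of x is either
   a q-subset y of S or is obtained from one by swapping a marked element
   e of y for a, and likewise for x' with a'.  Averaging over the marked
   batches (y, e) of S, double counting gives
     m_x  = avg ((1 - w) b_y + w b_(y - e + a)),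
     m_x' = avg ((1 - w) b_y + w b_(y - e + a')),   w = q / N,
   where y, y - e + a and y - e + a' are pairwise substitution neighbours.
   Since (p, q) |-> p^alpha q^(1 - alpha) is sublinear, Lambda_alpha is jointly
   convex, so Lambda_alpha(m_x || m_x') is bounded by its largest term. *)

From HB Require Import structures.
From mathcomp Require Import all_boot all_order all_algebra.
From mathcomp Require Import all_classical all_reals all_analysis.
From mathcomp Require Import ring measurable_realfun.
Set Implicit Arguments. Unset Strict Implicit. Unset Printing Implicit Defensive.
Import Order.TTheory GRing.Theory Num.Theory.
Local Open Scope ring_scope.

Section renyi_integrand.
Variables (R : realType) (al : R).
Hypothesis al_gt1 : 1 < al.

Let al_gt0 : 0 < al := lt_trans ltr01 al_gt1.

(* (p, q) |-> p^al q^(1-al) is the perspective of t |-> t^al, hence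
   subadditive; concretely, Hoelder with exponents al and al/(al-1) applied to
   p_i q_i^e and q_i^-e, where e = (1-al)/al. *)
Lemma powR_perspective_subadd (p1 p2 q1 q2 : R) :
  0 <= p1 -> 0 <= p2 -> 0 < q1 -> 0 < q2 ->
  (p1 + p2) `^ al * (q1 + q2) `^ (1 - al) <=
  p1 `^ al * q1 `^ (1 - al) + p2 `^ al * q2 `^ (1 - al).
Proof.
move=> p1_ge0 p2_ge0 q1_gt0 q2_gt0.
have al1_gt0 : 0 < al - 1 by rewrite subr_gt0.
set e := (1 - al) / al.
set X := p1 `^ al * q1 `^ (1 - al) + p2 `^ al * q2 `^ (1 - al).
have X_ge0 : 0 <= X by rewrite addr_ge0 // mulr_ge0 // powR_ge0.
have split_term p q : 0 <= p -> 0 < q ->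
  [/\ (p * q `^ e) * q `^ (- e) = p,
      (p * q `^ e) `^ al = p `^ al * q `^ (1 - al) &
      (q `^ (- e)) `^ (al / (al - 1)) = q].
  move=> p_ge0 q_gt0; split.
  - by rewrite -mulrA powRN mulfV ?mulr1 // gt_eqF // powR_gt0.
  - rewrite powRM // ?powR_ge0 // -powRrM; congr (_ * q `^ _).
    by rewrite /e; field; rewrite gt_eqF.
  - rewrite -powRrM.
    have -> : - e * (al / (al - 1)) = 1 by rewrite /e; field; rewrite ?gt_eqF.
    by rewrite powRr1 // ltW.
have [E11 E12 E13] := split_term p1 q1 p1_ge0 q1_gt0.
have [E21 E22 E23] := split_term p2 q2 p2_ge0 q2_gt0.
have := @hoelder2 R (p1 * q1 `^ e) (p2 * q2 `^ e) (q1 `^ (- e)) (q2 `^ (- e))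
  al (al / (al - 1)).
rewrite E11 E21 E12 E22 E13 E23 => hoelder.
have {}hoelder : p1 + p2 <= X `^ al^-1 * (q1 + q2) `^ ((al / (al - 1))^-1).
  apply: hoelder; rewrite ?mulr_ge0 ?powR_ge0 ?divr_gt0 //.
  by rewrite invf_div; field; rewrite gt_eqF.
have pow_al : (p1 + p2) `^ al <= X * (q1 + q2) `^ (al - 1).
  have := ge0_ler_powR (ltW al_gt0) _ _ hoelder.
  rewrite !nnegrE powRM ?powR_ge0 // -!powRrM invf_div.
  have -> : al^-1 * al = 1 by field; rewrite gt_eqF.
  have -> : (al - 1) / al * al = al - 1 by field; rewrite gt_eqF.
  by rewrite powRr1 //; apply; rewrite ?addr_ge0 ?mulr_ge0 ?powR_ge0.
by rewrite -[1 - al]opprB powRN ler_pdivrMr ?powR_gt0 ?addr_gt0.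
Qed.

Local Notation ri := (renyi_integrand al).

Lemma renyi_integrand_ge0 p q : (0 <= ri p q)%E.
Proof.
rewrite /renyi_integrand; case: ifP => // _; case: ifP => // _.
by rewrite lee_fin mulr_ge0 // powR_ge0.
Qed.

Lemma renyi_integrandE p q : 0 <= p -> 0 < q -> ri p q = (p `^ al * q `^ (1 - al))%:E.
Proof.
move=> p_ge0 q_gt0; rewrite /renyi_integrand (gt_eqF q_gt0).
by case: ifPn => [/eqP -> | //]; rewrite powR0 ?mul0r // gt_eqF.
Qed.

Lemma renyi_integrandZ c p q : 0 <= c -> 0 <= p -> 0 <= q ->
  ri (c * p) (c * q) = (c%:E * ri p q)%E.
Proof.
move=> c_ge0 p_ge0 q_ge0; have [->|c_neq0] := eqVneq c 0.
  by rewrite !mul0r mul0e /renyi_integrand eqxx.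
rewrite /renyi_integrand !mulf_eq0 (negbTE c_neq0) /=.
case: ifP => _; first by rewrite mule0.
case: ifP => _; first by rewrite gt0_muley // lt_neqAle eq_sym c_neq0.
rewrite -EFinM (powRM _ c_ge0 p_ge0) (powRM _ c_ge0 q_ge0) mulrACA.
by rewrite -powRD ?c_neq0 ?implybT // addrC subrK powRr1.
Qed.

Lemma renyi_integrand_subadd p1 p2 q1 q2 :
  0 <= p1 -> 0 <= p2 -> 0 <= q1 -> 0 <= q2 ->
  (ri (p1 + p2) (q1 + q2) <= ri p1 q1 + ri p2 q2)%E.
Proof.
move=> p1_ge0 p2_ge0; rewrite le0r => /predU1P[-> _|q1_gt0].
  rewrite add0r {2}/renyi_integrand eqxx.
  case: eqP => [->|_]; first by rewrite add0r add0e.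
  by rewrite addye ?leey // gt_eqF // (lt_le_trans _ (renyi_integrand_ge0 _ _)).
rewrite le0r => /predU1P[->|q2_gt0].
  rewrite addr0 {3}/renyi_integrand eqxx.
  case: eqP => [->|_]; first by rewrite addr0 adde0.
  by rewrite addey ?leey // gt_eqF // (lt_le_trans _ (renyi_integrand_ge0 _ _)).
rewrite !renyi_integrandE ?addr_ge0 ?addr_gt0 // -EFinD lee_fin.
exact: powR_perspective_subadd.
Qed.

End renyi_integrand.

Section Lambda_convexity.
Variables (R : realType) (d : measure_display) (T : measurableType d).
Variables (mu : {measure set T -> \bar R}) (al : R).
Hypothesis al_gt1 : 1 < al.

Lemma measurable_sum_pred (I : Type) (r : seq I) (P : pred I) (h : I -> T -> R) :
  (forall i, P i -> measurable_fun setT (h i)) ->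
  measurable_fun setT (fun z => \sum_(i <- r | P i) h i z).
Proof.
move=> mh; under eq_fun do rewrite big_mkcond /=.
apply: measurable_sum => i /=.
by case: (P i) (mh i) => [|_]; [apply | exact: measurable_cst].
Qed.

Lemma measurable_renyi_integrand (f g : T -> R) :
  measurable_fun setT f -> measurable_fun setT g ->
  measurable_fun setT (fun z => renyi_integrand al (f z) (g z)).
Proof.
move=> mf mg; rewrite /renyi_integrand.
apply: measurable_fun_ifT; first exact: measurable_fun_eqr.
  exact: measurable_cst.
apply: measurable_fun_ifT; first exact: measurable_fun_eqr.
  exact: measurable_cst.
by apply/measurable_EFinP; apply: measurable_funM;
  apply: (measurableT_comp (measurable_powR _)).
Qed.

Lemma LambdaZ (f g : T -> R) (c : R) :
  measurable_fun setT f -> measurable_fun setT g ->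
  (forall z, 0 <= f z) -> (forall z, 0 <= g z) -> 0 <= c ->
  Lambda mu al (fun z => c * f z) (fun z => c * g z) = (c%:E * Lambda mu al f g)%E.
Proof.
move=> mf mg f_ge0 g_ge0 c_ge0; rewrite /Lambda -ge0_integralZl //; last 2 first.
- exact: measurable_renyi_integrand.
- by move=> z _; exact: renyi_integrand_ge0.
by apply: eq_integral => z _; rewrite renyi_integrandZ.
Qed.

Lemma Lambda_subadd (f g f' g' : T -> R) :
  measurable_fun setT f -> measurable_fun setT g ->
  measurable_fun setT f' -> measurable_fun setT g' ->
  (forall z, 0 <= f z) -> (forall z, 0 <= g z) ->
  (forall z, 0 <= f' z) -> (forall z, 0 <= g' z) ->
  (Lambda mu al (fun z => (f z + f' z)%R) (fun z => (g z + g' z)%R) <=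
   Lambda mu al f g + Lambda mu al f' g')%E.
Proof.
move=> mf mg mf' mg' f_ge0 g_ge0 f'_ge0 g'_ge0.
rewrite /Lambda -ge0_integralD //; last 4 first.
- by move=> z _; exact: renyi_integrand_ge0.
- exact: measurable_renyi_integrand.
- by move=> z _; exact: renyi_integrand_ge0.
- exact: measurable_renyi_integrand.
apply: ge0_le_integral => //.
- by move=> z _; exact: renyi_integrand_ge0.
- by apply: measurable_renyi_integrand; exact: measurable_funD.
- by apply: emeasurable_funD; exact: measurable_renyi_integrand.
- by move=> z _; exact: renyi_integrand_subadd.
Qed.

Lemma Lambda_convex (I : Type) (r : seq I) (P : pred I) (c : I -> R)
    (f g : I -> T -> R) :
  (forall i, P i -> 0 <= c i) ->
  (forall i, P i -> measurable_fun setT (f i)) ->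
  (forall i, P i -> measurable_fun setT (g i)) ->
  (forall i, P i -> forall z, 0 <= f i z) ->
  (forall i, P i -> forall z, 0 <= g i z) ->
  (Lambda mu al (fun z => \sum_(i <- r | P i) c i * f i z)%R
                (fun z => \sum_(i <- r | P i) c i * g i z)%R <=
   \sum_(i <- r | P i) (c i)%:E * Lambda mu al (f i) (g i))%E.
Proof.
move=> c_ge0 mf mg f_ge0 g_ge0; elim: r => [|i r ih].
  rewrite big_nil /Lambda; under eq_integral do rewrite !big_nil /renyi_integrand eqxx.
  by rewrite integral0.
have sum_cons (h : I -> T -> R) : (fun z => \sum_(j <- i :: r | P j) c j * h j z) =
    if P i then (fun z => c i * h i z + \sum_(j <- r | P j) c j * h j z)
    else (fun z => \sum_(j <- r | P j) c j * h j z).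
  by case Pi: (P i); apply/funext => z; rewrite big_cons Pi.
rewrite !sum_cons big_cons; case: ifP => Pi //.
have mcf (h : I -> T -> R) j :
    measurable_fun setT (h j) -> measurable_fun setT (fun z => c j * h j z).
  by move=> mh; apply: measurable_funM => //; exact: measurable_cst.
apply: le_trans (@Lambda_subadd (fun z => c i * f i z) (fun z => c i * g i z)
  (fun z => \sum_(j <- r | P j) c j * f j z) (fun z => \sum_(j <- r | P j) c j * g j z)
  _ _ _ _ _ _ _ _) _.
- exact/mcf/mf.
- exact/mcf/mg.
- by apply: measurable_sum_pred => j Pj; apply/mcf/mf.
- by apply: measurable_sum_pred => j Pj; apply/mcf/mg.
- by move=> z; rewrite mulr_ge0 ?c_ge0 ?f_ge0.
- by move=> z; rewrite mulr_ge0 ?c_ge0 ?g_ge0.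
- by move=> z; apply: sumr_ge0 => j Pj; rewrite mulr_ge0 ?c_ge0 ?f_ge0.
- by move=> z; apply: sumr_ge0 => j Pj; rewrite mulr_ge0 ?c_ge0 ?g_ge0.
by rewrite (LambdaZ (mf i Pi) (mg i Pi) (f_ge0 i Pi) (g_ge0 i Pi) (c_ge0 i Pi)) leeD2l.
Qed.

Lemma Lambda_convex_le (I : Type) (r : seq I) (P : pred I) (c : I -> R)
    (f g : I -> T -> R) (M : \bar R) :
  (forall i, P i -> 0 <= c i) -> \sum_(i <- r | P i) c i = 1 ->
  (forall i, P i -> measurable_fun setT (f i)) ->
  (forall i, P i -> measurable_fun setT (g i)) ->
  (forall i, P i -> forall z, 0 <= f i z) ->
  (forall i, P i -> forall z, 0 <= g i z) ->
  (forall i, P i -> (Lambda mu al (f i) (g i) <= M)%E) ->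
  (Lambda mu al (fun z => \sum_(i <- r | P i) c i * f i z)%R
                (fun z => \sum_(i <- r | P i) c i * g i z)%R <= M)%E.
Proof.
move=> c_ge0 c_sum1 mf mg f_ge0 g_ge0 le_M.
apply: le_trans (Lambda_convex r c_ge0 mf mg f_ge0 g_ge0) _.
apply: le_trans (_ : \sum_(i <- r | P i) (c i)%:E * M <= M)%E.
  by apply: lee_sum => i Pi; rewrite lee_wpmul2l ?lee_fin ?c_ge0 ?le_M.
by rewrite -ge0_sume_distrl ?sumEFin ?c_sum1 ?mul1e // => i Pi; rewrite lee_fin c_ge0.
Qed.

End Lambda_convexity.

Section marked_batches.
Variable A : finType.
Implicit Types (S x y : {set A}) (a b c : A) (p u : {set A} * A).

Lemma card_setU1D1 y b c : b \in y -> c \notin y -> #|c |: (y :\ b)| = #|y|.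
Proof.
by move=> yb yc; rewrite cardsU1 [#|y|](cardsD1 b) yb !inE (negbTE yc) andbF.
Qed.

Lemma setU1D1K y b c : b \in y -> c \notin y -> b |: ((c |: (y :\ b)) :\ c) = y.
Proof. by move=> yb yc; rewrite setU1K ?finset.setD1K // !inE (negbTE yc) andbF. Qed.

Lemma subst_rel_setU1D1 y b c : b \in y -> c \notin y -> subst_rel y (c |: (y :\ b)).
Proof. by move=> yb yc; exists b, c; rewrite finset.setUC. Qed.

Lemma subst_rel_dist_le1 y y' : subst_rel y y' -> dist_le 1 y y'.
Proof. by move=> yy'; right; exists y. Qed.

Definition marked S q : pred ({set A} * A) :=
  fun p => [&& p.1 \subset S, #|p.1| == q & p.2 \in p.1].

Definition swap_mark a p : {set A} := a |: (p.1 :\ p.2).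

Lemma marked_notin S q a p : marked S q p -> a \notin S -> a \notin p.1.
Proof. by case/and3P=> pS _ _; apply: contra => /(fintype.subsetP pS). Qed.

Lemma card_swap_mark S q a p : marked S q p -> a \notin S -> #|swap_mark a p| = q.
Proof.
move=> mp aS; have /and3P[_ /eqP <- pe] := mp.
by rewrite card_setU1D1 ?(marked_notin mp).
Qed.

Lemma subst_rel_swap_mark S q a p :
  marked S q p -> a \notin S -> subst_rel p.1 (swap_mark a p).
Proof.
move=> mp aS; have /and3P[_ _ pe] := mp.
exact: subst_rel_setU1D1 pe (marked_notin mp aS).
Qed.

Lemma subst_rel_swap_marks S q a a' p : marked S q p ->
  a \notin S -> a' \notin S -> a != a' -> subst_rel (swap_mark a p) (swap_mark a' p).
Proof.
move=> mp aS a'S aa'; rewrite /swap_mark -{2}(@setU1K _ a (p.1 :\ p.2)); last first.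
  by rewrite !inE (negbTE (marked_notin mp aS)) andbF.
apply: subst_rel_setU1D1; first exact: setU11.
by rewrite !inE eq_sym (negbTE aa') (negbTE (marked_notin mp a'S)) andbF.
Qed.

Lemma sum_marked_fst (R : nmodType) S q (F : {set A} -> R) :
  \sum_(p | marked S q p) F p.1 =
  (\sum_(y : {set A} | (y \subset S) && (#|y| == q)) F y) *+ q.
Proof.
rewrite (eq_bigl (fun p : {set A} * A =>
  ((p.1 \subset S) && (#|p.1| == q)) && (p.2 \in p.1)));
  last by move=> p; rewrite /marked andbA.
rewrite -(pair_big_dep (fun y : {set A} => (y \subset S) && (#|y| == q))
  (fun (y : {set A}) (e : A) => e \in y) (fun y _ => F y)) /= -sumrMnl.
by apply: eq_bigr => y /andP[_ /eqP <-]; rewrite sumr_const.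
Qed.

Definition unswap_mark a u : {set A} * A := (u.2 |: (u.1 :\ a), u.2).

Definition swapped x a q : pred ({set A} * A) :=
  fun u => [&& u.1 \subset x, #|u.1| == q, a \in u.1 & u.2 \in x :\: u.1].

Lemma swapped_swap_mark x a q p : a \in x ->
  marked (x :\ a) q p -> swapped x a q (swap_mark a p, p.2).
Proof.
move=> xa mp; have /and3P[pxa _ pe] := mp.
have := fintype.subsetP pxa _ pe; rewrite in_setD1 => /andP[ea xe].
rewrite /swapped /= (card_swap_mark mp) ?in_setD1 ?eqxx //= setU11 /=.
rewrite /swap_mark finset.subUset finset.sub1set xa.
rewrite (fintype.subset_trans (subD1set _ _) (fintype.subset_trans pxa (subD1set _ _))).
by rewrite !inE eqxx (negbTE ea) xe.
Qed.

Lemma marked_unswap_mark x a q u : swapped x a q u -> marked (x :\ a) q (unswap_mark a u).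
Proof.
case: u => z e /and4P[zx /eqP zq za]; rewrite finset.in_setD => /andP[ez xe].
rewrite /marked /= card_setU1D1 // zq setU11 eqxx andbT subsetD1 finset.subUset.
rewrite finset.sub1set xe (fintype.subset_trans (subD1set _ _) zx) /= !inE eqxx /=.
by rewrite orbF andbT; apply: contraNneq ez => <-.
Qed.

Lemma sum_marked_swap (R : nmodType) x a q (F : {set A} -> R) : a \in x ->
  \sum_(p | marked (x :\ a) q p) F (swap_mark a p) =
  (\sum_(y : {set A} | [&& y \subset x, #|y| == q & a \in y]) F y) *+ (#|x| - q).
Proof.
move=> xa; pose h p := (swap_mark a p, p.2).
have hK u : swapped x a q u -> h (unswap_mark a u) = u.
  case: u => z e /and4P[_ _ za]; rewrite !inE => /andP[ez _].
  by rewrite /h /swap_mark /= setU1D1K.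
have -> : \sum_(p | marked (x :\ a) q p) F (swap_mark a p) =
          \sum_(u | swapped x a q u) F u.1.
  rewrite (reindex_onto h (unswap_mark a) hK) /=; apply: eq_bigl => -[y e].
  apply/idP/andP => [mp | [/marked_unswap_mark + /eqP unswap_h]]; last by rewrite unswap_h.
  split; first exact: swapped_swap_mark.
  have /and3P[_ _ ye] := mp.
  by rewrite /unswap_mark /swap_mark /= setU1D1K ?(marked_notin mp) // !inE eqxx.
rewrite (eq_bigl (fun u : {set A} * A =>
  [&& u.1 \subset x, #|u.1| == q & a \in u.1] && (u.2 \in x :\: u.1)));
  last by move=> u; rewrite /swapped !andbA.
rewrite -(pair_big_dep (fun y : {set A} => [&& y \subset x, #|y| == q & a \in y])
  (fun (y : {set A}) (e : A) => e \in x :\: y) (fun y _ => F y)) /= -sumrMnl.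
apply: eq_bigr => y /and3P[xy /eqP <- _].
by rewrite sumr_const cardsD (finset.setIidPr xy).
Qed.

End marked_batches.

Section subsampling.
Variables (R : realType) (A : finType).

(* (q C(N-1, q))^-1 is one over the number of marked batches of x :\ a: every
   q-batch of x avoiding a carries q marks, and every q-batch containing a
   arises by swapping from N - q of them. *)
Lemma sum_subsets_marked (x : {set A}) (a : A) (q : nat) (g : {set A} -> R) :
  a \in x -> (0 < q < #|x|)%N ->
  \sum_(y : {set A} | (y \subset x) && (#|y| == q)) g y / ('C(#|x|, q))%:R =
  \sum_(p | marked (x :\ a) q p) (q%:R * ('C(#|x|.-1, q))%:R)^-1 *
     ((1 - q%:R / #|x|%:R) * g p.1 + q%:R / #|x|%:R * g (swap_mark a p)).
Proof.
move=> xa /andP[q_gt0 qN]; set N := #|x|.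
set c := (_ * _)^-1; set w := q%:R / N%:R.
rewrite -mulr_sumr big_split -!mulr_sumr /= sum_marked_fst sum_marked_swap // -/N.
rewrite -(mulr_natr _ q) -(mulr_natr _ (N - q)).
rewrite -mulr_suml (bigID (fun y : {set A} => a \in y)) /=.
rewrite [X in X + _](eq_bigl (fun y : {set A} => [&& y \subset x, #|y| == q & a \in y]));
  last by move=> y; rewrite andbA.
rewrite [X in _ + X](eq_bigl (fun y : {set A} => (y \subset x :\ a) && (#|y| == q)));
  last by move=> y; rewrite subsetD1 andbAC.
have N_gt0 : (0 < N)%N by apply: ltn_trans qN.
have binE : ('C(N.-1, q))%:R = (N - q)%:R * ('C(N, q))%:R / N%:R :> R.
  rewrite -natrM -mul_bin_down natrM mulrAC divff ?mul1r //.
  by rewrite pnatr_eq0 -lt0n.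
rewrite /c /w binE natrB ?(ltnW qN) //; field.
rewrite -natrB ?(ltnW qN) // !pnatr_eq0 -!lt0n q_gt0 N_gt0 bin_gt0 (ltnW qN) /=.
by rewrite subn_gt0 qN.
Qed.

Lemma sum_marked_weight (x : {set A}) (a : A) (q : nat) :
  a \in x -> (0 < q < #|x|)%N ->
  \sum_(p | marked (x :\ a) q p) (q%:R * ('C(#|x|.-1, q))%:R)^-1 = 1 :> R.
Proof.
move=> xa qx; have := sum_subsets_marked (fun=> 1) xa qx.
under [RHS]eq_bigr do rewrite !mulr1 subrK mulr1.
move=> <-; rewrite -mulr_suml (eq_bigl (mem [set y : {set A} | y \subset x & #|y| == q])).
  by rewrite sumr_const cards_draws divff // pnatr_eq0 -lt0n bin_gt0 ltnW // (andP qx).2.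
by move=> y; rewrite !inE.
Qed.

Variable T : Type.
Implicit Type b : {set A} -> T -> R.

Lemma mixture_marked b (x : {set A}) (a : A) (q : nat) :
  a \in x -> (0 < q < #|x|)%N ->
  mixture q b x = fun z => \sum_(p | marked (x :\ a) q p)
    (q%:R * ('C(#|x|.-1, q))%:R)^-1 *
    ((1 - q%:R / #|x|%:R) * b p.1 z + q%:R / #|x|%:R * b (swap_mark a p) z).
Proof. by move=> xa qx; apply/funext => z; exact: sum_subsets_marked. Qed.

Lemma mixture_batch0 b (x : {set A}) : mixture 0 b x = b finset.set0.
Proof.
apply/funext => z; rewrite /mixture (big_pred1 finset.set0) ?bin0 ?divr1 // => y.
by rewrite cards_eq0 andb_idl // => /eqP ->; exact: finset.sub0set.
Qed.

End subsampling.

Lemma mix_measurable_ge0 (R : realType) (d : measure_display) (T : measurableType d)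
    (mu : {measure set T -> \bar R}) (w : R) (f g : T -> R) :
  0 <= w <= 1 -> is_density mu f -> is_density mu g ->
  measurable_fun setT (fun z => (1 - w) * f z + w * g z) /\
  forall z, 0 <= (1 - w) * f z + w * g z.
Proof.
case/andP=> w_ge0 w_le1 [mf f_ge0 _] [mg g_ge0 _]; split.
  by apply: measurable_funD; apply: measurable_funM => //; exact: measurable_cst.
by move=> z; rewrite addr_ge0 // mulr_ge0 // subr_ge0.
Qed.

Lemma le_bigmax_neighbours (R : realType) (A : finType) (q : nat)
    (F : {set A} -> {set A} -> {set A} -> {set A} -> \bar R) (y1 y2 y2' : {set A}) :
  #|y1| = q -> #|y2| = q -> #|y2'| = q ->
  dist_le 1 y1 y2 -> dist_le 1 y1 y2' -> dist_le 1 y2 y2' ->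
  (F y1 y2 y1 y2' <=
   \big[Order.max/-oo%E]_(y11 : {set A} | #|y11| == q)
   \big[Order.max/-oo%E]_(y12 : {set A} | #|y12| == q)
   \big[Order.max/-oo%E]_(y21 : {set A} | #|y21| == q)
   \big[Order.max/-oo%E]_(y22 : {set A} |
        [&& #|y22| == q, y11 == y21,
            `[< dist_le 1 y11 y12 >], `[< dist_le 1 y11 y22 >]
          & `[< dist_le 1 y12 y22 >]]) F y11 y12 y21 y22)%E.
Proof.
move=> /eqP y1q /eqP y2q /eqP y2'q d12 d12' d22'.
apply: (bigmax_sup y1) => //; apply: (bigmax_sup y2) => //.
apply: (bigmax_sup y1) => //; apply: (bigmax_sup y2') => //.
by apply/and5P; split => //; exact/asboolP.
Qed.

Unset Implicit Arguments.

Theorem mainTheorem11 (R : realType) (d : measure_display) (T : measurableType d)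
  (mu : {measure set T -> \bar R}) (A : finType) (q : nat)
  (b : {set A} -> T -> R)
  (hb : forall y : {set A}, #|y| = q -> is_density mu (b y))
  (alpha : R) (halpha : 1 < alpha)
  (N : nat) (x x' : {set A})
  (hxN : #|x| = N) (hqN : (q < N)%N) (hx'N : #|x'| = N)
  (hxx' : subst_rel x x') :
  let w : R := q%:R / N%:R in
  (Lambda mu alpha (mixture q b x) (mixture q b x') <=
   \big[Order.max/-oo%E]_(y11 : {set A} | #|y11| == q)
   \big[Order.max/-oo%E]_(y12 : {set A} | #|y12| == q)
   \big[Order.max/-oo%E]_(y21 : {set A} | #|y21| == q)
   \big[Order.max/-oo%E]_(y22 : {set A} |
        [&& #|y22| == q, y11 == y21,
            `[< dist_le 1 y11 y12 >], `[< dist_le 1 y11 y22 >]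
          & `[< dist_le 1 y12 y22 >]])
     Lambda mu alpha
       (fun z => ((1 - w) * b y11 z + w * b y12 z)%R)
       (fun z => ((1 - w) * b y21 z + w * b y22 z)%R))%E.
Proof.
cbv zeta; set w : R := q%:R / N%:R.
have [q0|q_gt0] := posnP q.
  rewrite q0 !mixture_batch0.
  have -> : b finset.set0 = fun z => ((1 - w) * b finset.set0 z + w * b finset.set0 z)%R.
    by apply/funext => z; rewrite -mulrDl subrK mul1r.
  by apply: le_bigmax_neighbours; rewrite ?cards0 //; left.
case: hxx' hx'N => a [a' [xa a'x ->]] hx'N.
have a'S : a' \notin x :\ a by rewrite !inE negb_and a'x orbT.
have aS : a \notin x :\ a by rewrite !inE eqxx.
have x'a' : a' \in x :\ a :|: [set a'] by rewrite !inE eqxx orbT.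
have x'S : (x :\ a :|: [set a']) :\ a' = x :\ a by rewrite finset.setUC setU1K.
have w01 : 0 <= w <= 1.
  by rewrite divr_ge0 //= ler_pdivrMr ?mul1r ?ltr0n ?ler_nat ?(ltnW hqN) // (leq_ltn_trans _ hqN).
rewrite (mixture_marked b xa) ?hxN ?q_gt0 // (mixture_marked b x'a') ?hx'N ?q_gt0 // x'S -/w.
have cards p : marked (x :\ a) q p ->
    [/\ #|p.1| = q, #|swap_mark a p| = q & #|swap_mark a' p| = q].
  by move=> mp; rewrite !(card_swap_mark mp) //; case/and3P: mp => _ /eqP.
have mix (y y' : {set A}) (hy : #|y| = q) (hy' : #|y'| = q) :=
  mix_measurable_ge0 w01 (hb y hy) (hb y' hy').
apply: (Lambda_convex_le halpha).
- by move=> p _; rewrite invr_ge0 mulr_ge0.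
- by rewrite -hxN sum_marked_weight // hxN q_gt0.
- by move=> p /cards[y1 y2 _]; case: (mix _ _ y1 y2).
- by move=> p /cards[y1 _ y2']; case: (mix _ _ y1 y2').
- by move=> p /cards[y1 y2 _]; case: (mix _ _ y1 y2).
- by move=> p /cards[y1 _ y2']; case: (mix _ _ y1 y2').
move=> p mp; have [y1 y2 y2'] := cards p mp.
apply: le_bigmax_neighbours => //; apply: subst_rel_dist_le1.
- exact: subst_rel_swap_mark mp aS.
- exact: subst_rel_swap_mark mp a'S.
- by apply: subst_rel_swap_marks mp aS a'S _; apply: contraNneq a'x => <-.
Qed.
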